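(* Let $\kappa,\tau\in\mathbb{R}$ with $\tau\neq 0$ and $\kappa-4\tau^2\neq 0$. Then there exists no totally umbilic surface, complete or not (i.e. not even a small immersed piece of surface), in $\mathbb{M}^3(\kappa,\tau)$. In particular $\mathbb{M}^3(\kappa,\tau)$ contains no totally geodesic surface.
   Context: For $\kappa\in\mathbb{R}$, $\mathbb{M}^2(\kappa)$ denotes the complete simply connected surface of constant curvature $\kappa$. For $\kappa\in\mathbb{R}$ and $\tau\in\mathbb{R}$, $\mathbb{M}^3(\kappa,\tau)$ denotes the connected, simply connected homogeneous Riemannian 3-manifold which is a Riemannian submersion $\mathbb{M}^3(\kappa,\tau)\to\mathbb{M}^2(\kappa)$ with geodesic fibers, whose unit vertical field $\xi$ (tangent to the fibers) is a Killing field satisfying $\overline\nabla_X\xi=\tau\,(X\wedge\xi)$ for every tangent vector $X$, where $\overline\nabla$ is the Levi-Civita connection and $\wedge$ the cross product. For $\tau\neq0$ and $\kappa-4\tau^2\ne0$ these are the Berger spheres ($\kappa>0$), the spaces with the isometry group of the Heisenberg group $\mathrm{Nil}_3$ ($\kappa=0$), and the spaces with the isometry group of $\widetilde{\mathrm{PSL}_2(\mathbb{R})}$ ($\kappa<0$). A surface (immersed, of class $C^3$) is totally umbilic if at each point its shape operator is a multiple of the identity, i.e. $\overline\nabla_wN=\lambda w$ for all tangent $w$, for some function $\lambda$ and a local unit normal $N$; totally geodesic means $\lambda\equiv0$. *)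

From Stdlib Require Import Reals.
From Coquelicot Require Import Coquelicot.
Open Scope R_scope.

(* Points of R^3 in coordinates (x,y,z) = (p 0, p 1, p 2). *)
Definition pt := nat -> R.

Definition upd (p : pt) (k : nat) (t : R) : pt :=
  fun i => if Nat.eqb i k then t else p i.

Definition sum3 (F : nat -> R) : R := F 0%nat + F 1%nat + F 2%nat.

(* Standard coordinate model of M^3(kappa,tau) (Daniel):
   domain  Omega = { p | 1 + kappa/4 (x^2+y^2) > 0 },
   lam = 1/(1 + kappa/4 (x^2+y^2)),
   ds^2 = lam^2 (dx^2 + dy^2) + (dz + tau lam (y dx - x dy))^2. *)
Definition in_model (kappa : R) (p : pt) : Prop :=
  1 + kappa / 4 * (p 0%nat ^ 2 + p 1%nat ^ 2) > 0.

Definition lamM (kappa : R) (p : pt) : R :=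
  / (1 + kappa / 4 * (p 0%nat ^ 2 + p 1%nat ^ 2)).

Definition gM (kappa tau : R) (i j : nat) (p : pt) : R :=
  let l := lamM kappa p in
  let x := p 0%nat in let y := p 1%nat in
  match i, j with
  | 0%nat, 0%nat => l ^ 2 + tau ^ 2 * l ^ 2 * y ^ 2
  | 1%nat, 1%nat => l ^ 2 + tau ^ 2 * l ^ 2 * x ^ 2
  | 2%nat, 2%nat => 1
  | 0%nat, 1%nat | 1%nat, 0%nat => - (tau ^ 2 * l ^ 2 * x * y)
  | 0%nat, 2%nat | 2%nat, 0%nat => tau * l * y
  | 1%nat, 2%nat | 2%nat, 1%nat => - (tau * l * x)
  | _, _ => 0
  end.

Definition dgM (kappa tau : R) (l i j : nat) (p : pt) : R :=
  Derive (fun t => gM kappa tau i j (upd p l t)) (p l).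

(* Christoffel symbols of the first kind:
   Gamma_{ij,k} = 1/2 (d_i g_jk + d_j g_ik - d_k g_ij) = g(nabla_{d_i} d_j, d_k) *)
Definition Gamma1 (kappa tau : R) (i j k : nat) (p : pt) : R :=
  / 2 * (dgM kappa tau i j k p + dgM kappa tau j i k p - dgM kappa tau k i j p).

Definition gdot (kappa tau : R) (p : pt) (v w : pt) : R :=
  sum3 (fun i => sum3 (fun j => gM kappa tau i j p * v i * w j)).

Definition du (h : R * R -> R) (q : R * R) : R := Derive (fun t => h (t, snd q)) (fst q).
Definition dv (h : R * R -> R) (q : R * R) : R := Derive (fun t => h (fst q, t)) (snd q).

Definition fu (f : R * R -> pt) (q : R * R) : pt := fun i => du (fun q' => f q' i) q.
Definition fv (f : R * R -> pt) (q : R * R) : pt := fun i => dv (fun q' => f q' i) q.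

Fixpoint Ck (n : nat) (U : R * R -> Prop) (h : R * R -> R) : Prop :=
  match n with
  | O => forall q, U q -> continuous h q
  | S m =>
      (forall q, U q -> continuous h q /\
                        ex_derive (fun t => h (t, snd q)) (fst q) /\
                        ex_derive (fun t => h (fst q, t)) (snd q)) /\
      Ck m U (du h) /\ Ck m U (dv h)
  end.

(* Euclidean cross product is nonzero <-> f_u, f_v linearly independent *)
Definition indep (a b : pt) : Prop :=
  a 1%nat * b 2%nat - a 2%nat * b 1%nat <> 0 \/
  a 2%nat * b 0%nat - a 0%nat * b 2%nat <> 0 \/
  a 0%nat * b 1%nat - a 1%nat * b 0%nat <> 0.

(* Lowered covariant derivative: g( nabla_{f_u} N , d_k ) (dir = true)
   or g( nabla_{f_v} N , d_k ) (dir = false), at the parameter q. *)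
Definition covN_low (kappa tau : R) (f N : R * R -> pt) (dir : bool) (q : R * R) (k : nat) : R :=
  let w := if dir then fu f q else fv f q in
  let dN := if dir then fu N q else fv N q in
  let p := f q in
  sum3 (fun j => gM kappa tau k j p * dN j) +
  sum3 (fun i => sum3 (fun j => Gamma1 kappa tau i j k p * w i * N q j)).

(* A C^3 immersed surface piece f : U -> M^3(kappa,tau) (U open nonempty in R^2),
   with a local unit normal N, which is totally umbilic with umbilicity function lam:
   nabla_w N = lam w for all tangent w (checked on the basis f_u, f_v, by linearity,
   and tested against the coordinate fields d_k, by nondegeneracy of g). *)
Definition totally_umbilic_surface (kappa tau : R) (U : R * R -> Prop)
  (f N : R * R -> pt) (lam : R * R -> R) : Prop :=
  open U /\ (exists q, U q) /\
  (forall q, U q -> in_model kappa (f q)) /\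
  (forall i, (i < 3)%nat -> Ck 3 U (fun q => f q i)) /\
  (forall q, U q -> indep (fu f q) (fv f q)) /\
  (forall q, U q ->
     gdot kappa tau (f q) (N q) (fu f q) = 0 /\
     gdot kappa tau (f q) (N q) (fv f q) = 0 /\
     gdot kappa tau (f q) (N q) (N q) = 1) /\
  (forall q i, U q -> (i < 3)%nat ->
     ex_derive (fun t => N (t, snd q) i) (fst q) /\
     ex_derive (fun t => N (fst q, t) i) (snd q)) /\
  (forall q k, U q -> (k < 3)%nat ->
     covN_low kappa tau f N true q k = lam q * gdot kappa tau (f q) (fu f q) (upd (fun _ => 0) k 1) /\
     covN_low kappa tau f N false q k = lam q * gdot kappa tau (f q) (fv f q) (upd (fun _ => 0) k 1)).

Definition totally_geodesic_surface (kappa tau : R) (U : R * R -> Prop) (f N : R * R -> pt) : Prop :=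
  totally_umbilic_surface kappa tau U f N (fun _ => 0).

From Stdlib Require Import Reals Lra Lia.
From Coquelicot Require Import Coquelicot.
Open Scope R_scope.

(** Work in the orthonormal frame (E1, E2, xi) of the model and write a, b, n for the frame
    coordinates of f_u, f_v and N.  Umbilicity says n_u = lam a - Om(a, n) and
    n_v = lam b - Om(b, n), where Om is the connection form of the frame.  Differentiating
    <n, a> = <n, b> = 0 gives the second fundamental form, hence lam, in terms of f, and one more
    differentiation, together with the symmetry of the third derivatives of f, gives the Codazzi
    equations lam_u = (kappa - 4 tau^2) nu a_3 and lam_v = (kappa - 4 tau^2) nu b_3, where
    nu = n_3 = <N, xi>.  Since kappa - 4 tau^2 <> 0 and tau <> 0, the compatibility
    lam_uv = lam_vu forces 3 nu^2 = 1.  Then nu is constant, and nu_u = nu_v = 0 says that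
    (- tau n_2, tau n_1, lam) is normal to the surface, hence parallel to n; so n_1 = n_2 = 0 and
    nu^2 = 1, a contradiction. *)

(** * Calculus on the real line and on the plane *)

(* Coquelicot's rules specialised to [R -> R], with the derivative in the shape that
   [derive_tac] below produces. *)
Lemma is_derive_ext_value (f : R -> R) (x l l' : R) : is_derive f x l -> l = l' -> is_derive f x l'.
Proof. intros H E; subst; exact H. Qed.
Lemma is_derive_plus_R (f g : R -> R) (x df dg : R) : is_derive f x df -> is_derive g x dg ->
  is_derive (fun s => f s + g s) x (df + dg).
Proof. intros; apply (is_derive_plus f g); auto. Qed.
Lemma is_derive_minus_R (f g : R -> R) (x df dg : R) : is_derive f x df -> is_derive g x dg ->
  is_derive (fun s => f s - g s) x (df - dg).
Proof. intros; apply (is_derive_minus f g); auto. Qed.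
Lemma is_derive_opp_R (f : R -> R) (x l : R) : is_derive f x l -> is_derive (fun s => - f s) x (- l).
Proof. intro H. apply (is_derive_opp f x l H). Qed.
Lemma is_derive_mult_R (f g : R -> R) (x df dg : R) : is_derive f x df -> is_derive g x dg ->
  is_derive (fun s => f s * g s) x (df * g x + f x * dg).
Proof. intros; apply (is_derive_mult f g); auto. intros; apply Rmult_comm. Qed.
Lemma is_derive_sqr_R (f : R -> R) (x df : R) : is_derive f x df ->
  is_derive (fun s => f s ^ 2) x (2 * f x * df).
Proof. intro H. eapply is_derive_ext_value; [apply (is_derive_pow f 2 x df H)|]. simpl; ring. Qed.
Lemma is_derive_inv_R (f : R -> R) (x df : R) : is_derive f x df -> f x <> 0 ->
  is_derive (fun s => / f s) x (- df / f x ^ 2).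
Proof. intros H Hx. eapply is_derive_ext_value; [apply (is_derive_inv f x df H Hx)|]. reflexivity. Qed.
Lemma is_derive_const_R (c x : R) : is_derive (fun _ => c) x 0.
Proof. apply (is_derive_const c x). Qed.

Ltac derive_tac := repeat match goal with
  | H : is_derive ?g ?x _ |- is_derive ?g ?x _ => exact H
  | |- is_derive (fun _ => ?c) _ _ => apply is_derive_const_R
  | |- is_derive (fun s => _ + _) _ _ => apply is_derive_plus_R
  | |- is_derive (fun s => _ - _) _ _ => apply is_derive_minus_R
  | |- is_derive (fun s => _ * _) _ _ => apply is_derive_mult_R
  | |- is_derive (fun s => - _) _ _ => apply is_derive_opp_R
  | |- is_derive (fun s => _ ^ 2) _ _ => apply is_derive_sqr_R
  | |- is_derive (fun s => / _) _ _ => apply is_derive_inv_R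
  end.

(* The hypotheses of [derive_tac] live over [R_AbsRing]; unfolding it lets [ring] and [field] see
   the final equation as one over [R]. *)
Ltac derive_eq := eapply is_derive_ext_value;
  [derive_tac; try lra | cbv beta; change (AbsRing.sort R_AbsRing) with R in *].

Ltac components H :=
  let H0 := fresh H in let H1 := fresh H in let H2 := fresh H in
  pose proof (H 0%nat ltac:(lia)) as H0; pose proof (H 1%nat ltac:(lia)) as H1;
  pose proof (H 2%nat ltac:(lia)) as H2; cbv beta in H0, H1, H2.

Definition is_derive_vec (X : R -> pt) (s0 : R) (dX : pt) : Prop :=
  forall i, (i < 3)%nat -> is_derive (fun s => X s i) s0 (dX i).

Lemma is_derive_locally_zero (F : R -> R) (x l : R) :
  is_derive F x l -> locally x (fun s => F s = 0) -> l = 0.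
Proof.
  intros H Hz.
  assert (H0 : is_derive F x 0).
  { apply (is_derive_ext_loc (fun _ => 0)); [|apply is_derive_const_R].
    eapply filter_imp; [|exact Hz]. intros s Hs. simpl. rewrite Hs. reflexivity. }
  rewrite <- (is_derive_unique _ _ _ H). exact (is_derive_unique _ _ _ H0).
Qed.

Lemma is_derive_locally_const_sq (g : R -> R) (x d c : R) :
  is_derive g x d -> locally x (fun s => g s ^ 2 = c) -> c <> 0 -> d = 0.
Proof.
  intros Hd Hl Hc.
  assert (Hx : g x ^ 2 = c) by exact (locally_singleton _ _ Hl).
  assert (E : 2 * g x * d - 0 = 0).
  { apply (is_derive_locally_zero (fun s => g s ^ 2 - c) x).
    - apply is_derive_minus_R; [apply is_derive_sqr_R; exact Hd | apply is_derive_const_R].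
    - eapply filter_imp; [|exact Hl]. intros s Hs. simpl in Hs |- *. lra. }
  assert (Hg : g x <> 0) by (intro Z; rewrite Z in Hx; simpl in Hx; lra).
  apply (Rmult_eq_reg_l (2 * g x)); lra.
Qed.

Lemma sign_const_on_segment (g : R -> R) a b :
  (forall s, Rmin a b <= s <= Rmax a b -> ex_derive g s /\ locally s (fun s' => g s' ^ 2 = 1)) ->
  g a = g b.
Proof.
  intros Hs.
  destruct (MVT_gen g a b (fun _ => 0)) as [c [_ Hc]].
  - intros x Hx. destruct (Hs x ltac:(lra)) as [E L].
    pose proof (Derive_correct _ _ E) as D.
    rewrite (is_derive_locally_const_sq g x _ 1 D L ltac:(lra)) in D. exact D.
  - intros x Hx. destruct (Hs x Hx) as [E _].
    apply continuity_pt_filterlim. exact (ex_derive_continuous g x E).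
  - lra.
Qed.

Lemma segment_abs_bound a b s : Rmin a b <= s <= Rmax a b -> Rabs (s - a) <= Rabs (b - a).
Proof.
  unfold Rmin, Rmax. intros H. destruct (Rle_dec a b); unfold Rabs; repeat destruct Rcase_abs; lra.
Qed.

Lemma continuous2_plus (g h : R * R -> R) x :
  continuous g x -> continuous h x -> continuous (fun q => g q + h q) x.
Proof. intros; apply (continuous_plus g h); auto. Qed.
Lemma continuous2_opp (g : R * R -> R) x : continuous g x -> continuous (fun q => - g q) x.
Proof. intros; apply (continuous_opp g); auto. Qed.
Lemma continuous2_minus (g h : R * R -> R) x :
  continuous g x -> continuous h x -> continuous (fun q => g q - h q) x.
Proof. intros; apply continuous2_plus; [|apply continuous2_opp]; auto. Qed.
Lemma continuous2_mult (g h : R * R -> R) x :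
  continuous g x -> continuous h x -> continuous (fun q => g q * h q) x.
Proof. intros; apply (continuous_mult g h); auto. Qed.
Lemma continuous2_const (c : R) (x : R * R) : continuous (fun _ => c) x.
Proof. apply continuous_const. Qed.
Lemma continuous2_inv (g : R * R -> R) x :
  continuous g x -> g x <> 0 -> continuous (fun q => / g q) x.
Proof. intros H1 H2. apply (continuous_comp g (fun y => / y)); [exact H1|]. apply continuous_Rinv; exact H2. Qed.
Lemma continuous2_div (g h : R * R -> R) x :
  continuous g x -> continuous h x -> h x <> 0 -> continuous (fun q => g q / h q) x.
Proof. intros; apply continuous2_mult; [|apply continuous2_inv]; auto. Qed.
Lemma continuous2_pow (g : R * R -> R) n x : continuous g x -> continuous (fun q => g q ^ n) x.
Proof. intro H. induction n as [|n IH]; simpl; [apply continuous2_const | apply continuous2_mult; auto]. Qed.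
Lemma continuous2_sqrt (g : R * R -> R) x : continuous g x -> continuous (fun q => sqrt (g q)) x.
Proof. intro H. apply (continuous_comp g sqrt); [exact H|]. apply continuous_sqrt. Qed.

Ltac continuity_tac := repeat match goal with
  | |- continuous (fun _ => ?c) _ => apply continuous2_const
  | |- continuous (fun q => _ + _) _ => apply continuous2_plus
  | |- continuous (fun q => _ - _) _ => apply continuous2_minus
  | |- continuous (fun q => _ * _) _ => apply continuous2_mult
  | |- continuous (fun q => - _) _ => apply continuous2_opp
  | |- continuous (fun q => _ / _) _ => apply continuous2_div
  | |- continuous (fun q => / _) _ => apply continuous2_inv
  | |- continuous (fun q => _ ^ _) _ => apply continuous2_pow
  | |- continuous (fun q => sqrt _) _ => apply continuous2_sqrt
  | H : continuous ?g ?x |- continuous ?g ?x => exact H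
  end.

Lemma locally_line_u (U : R * R -> Prop) u v :
  locally (u, v) U -> locally u (fun s => U (s, v)).
Proof.
  intro HU. apply (locally_2d_1d_const_y (fun a b => U (a, b))), locally_2d_locally.
  eapply filter_imp; [|exact HU]. intros [a b] H; exact H.
Qed.

Lemma locally_line_v (U : R * R -> Prop) u v :
  locally (u, v) U -> locally v (fun s => U (u, s)).
Proof.
  intro HU. apply (locally_2d_1d_const_x (fun a b => U (a, b))), locally_2d_locally.
  eapply filter_imp; [|exact HU]. intros [a b] H; exact H.
Qed.

Lemma continuity_2d_pt_continuous (h : R * R -> R) u v :
  continuous h (u, v) -> continuity_2d_pt (fun a b => h (a, b)) u v.
Proof.
  intro H. apply continuity_2d_pt_filterlim.
  eapply filterlim_ext; [|exact H]. intros [a b]. reflexivity.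
Qed.

Lemma schwarz_du_dv (U : R * R -> Prop) (h : R * R -> R) u v :
  open U -> U (u, v) ->
  (forall q, U q ->
     ex_derive (fun s => h (s, snd q)) (fst q) /\ ex_derive (fun s => h (fst q, s)) (snd q) /\
     ex_derive (fun s => dv h (s, snd q)) (fst q) /\ ex_derive (fun s => du h (fst q, s)) (snd q)) ->
  continuous (du (dv h)) (u, v) -> continuous (dv (du h)) (u, v) ->
  du (dv h) (u, v) = dv (du h) (u, v).
Proof.
  intros HU Huv Hd C1 C2. unfold du, dv; simpl.
  apply (Schwarz (fun a b => h (a, b)) u v).
  - apply locally_2d_locally. eapply filter_imp; [|exact (HU _ Huv)].
    intros [a b] Hab. exact (Hd _ Hab).
  - exact (continuity_2d_pt_continuous _ u v C1).
  - exact (continuity_2d_pt_continuous _ u v C2).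
Qed.

Section Regularity.

Variable U : R * R -> Prop.

Definition Cvec (n : nat) (g : R * R -> pt) : Prop :=
  forall i, (i < 3)%nat -> Ck n U (fun q => g q i).

Lemma Ck_weaken n h : Ck (S n) U h -> Ck n U h.
Proof.
  revert h. induction n as [|n IH]; intros h [H0 [H1 H2]].
  - intros q Hq. apply (H0 q Hq).
  - split; [exact H0|]. split; apply IH; assumption.
Qed.

Lemma Ck_continuous n h q : Ck n U h -> U q -> continuous h q.
Proof.
  intros H Hq. induction n as [|n IH]; [exact (H q Hq)|]. apply IH, Ck_weaken, H.
Qed.

Lemma Cvec_weaken n g : Cvec (S n) g -> Cvec n g.
Proof. intros H i Hi. exact (Ck_weaken n _ (H i Hi)). Qed.

Lemma Cvec_fu n g : Cvec (S n) g -> Cvec n (fu g).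
Proof. intros H i Hi. exact (proj1 (proj2 (H i Hi))). Qed.

Lemma Cvec_fv n g : Cvec (S n) g -> Cvec n (fv g).
Proof. intros H i Hi. exact (proj2 (proj2 (H i Hi))). Qed.

Lemma Cvec_continuous n g q i : Cvec n g -> U q -> (i < 3)%nat -> continuous (fun q => g q i) q.
Proof. intros H Hq Hi. exact (Ck_continuous n _ q (H i Hi) Hq). Qed.

Lemma Cvec_is_derive_u n g u v : Cvec (S n) g -> U (u, v) ->
  is_derive_vec (fun s => g (s, v)) u (fu g (u, v)).
Proof.
  intros H Huv i Hi. destruct (proj1 (H i Hi) _ Huv) as [_ [Hd _]]. exact (Derive_correct _ _ Hd).
Qed.

Lemma Cvec_is_derive_v n g u v : Cvec (S n) g -> U (u, v) ->
  is_derive_vec (fun s => g (u, s)) v (fv g (u, v)).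
Proof.
  intros H Huv i Hi. destruct (proj1 (H i Hi) _ Huv) as [_ [_ Hd]]. exact (Derive_correct _ _ Hd).
Qed.

Lemma Cvec_schwarz g u v i : open U -> Cvec 2 g -> U (u, v) -> (i < 3)%nat ->
  fu (fv g) (u, v) i = fv (fu g) (u, v) i.
Proof.
  intros HU H Huv Hi. destruct (H i Hi) as [R0 [[R1 [C11 C12]] [R2 [C21 C22]]]].
  apply (schwarz_du_dv U _ u v HU Huv); [| exact (C21 _ Huv) | exact (C12 _ Huv)].
  intros q Hq. destruct (R0 q Hq) as [_ [E1 E2]].
  destruct (R2 q Hq) as [_ [E3 _]]. destruct (R1 q Hq) as [_ [_ E4]]. tauto.
Qed.

End Regularity.

(** * Vectors of R^3 *)

Definition dot3 (a b : pt) : R := a 0%nat * b 0%nat + a 1%nat * b 1%nat + a 2%nat * b 2%nat.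

Definition cross3 (a b : pt) : pt := fun c =>
  match c with
  | 0%nat => a 1%nat * b 2%nat - a 2%nat * b 1%nat
  | 1%nat => a 2%nat * b 0%nat - a 0%nat * b 2%nat
  | _ => a 0%nat * b 1%nat - a 1%nat * b 0%nat
  end.

Lemma dot3_is_derive (X Y : R -> pt) dX dY s0 :
  is_derive_vec X s0 dX -> is_derive_vec Y s0 dY ->
  is_derive (fun s => dot3 (X s) (Y s)) s0 (dot3 dX (Y s0) + dot3 (X s0) dY).
Proof.
  intros HX HY. components HX. components HY. unfold dot3. derive_eq. ring.
Qed.

Lemma cross3_is_derive (X Y : R -> pt) dX dY s0 :
  is_derive_vec X s0 dX -> is_derive_vec Y s0 dY ->
  is_derive_vec (fun s => cross3 (X s) (Y s)) s0 (fun c => cross3 dX (Y s0) c + cross3 (X s0) dY c).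
Proof.
  intros HX HY c Hc. components HX. components HY.
  destruct c as [|[|[|c]]]; try lia; unfold cross3; derive_eq; ring.
Qed.

Lemma normalized_dot_ex_derive (n m : R -> pt) dn dm s0 :
  is_derive_vec n s0 dn -> is_derive_vec m s0 dm -> dot3 (m s0) (m s0) > 0 ->
  ex_derive (fun s => dot3 (n s) (m s) / sqrt (dot3 (m s) (m s))) s0.
Proof.
  intros Hn Hm Hp. eexists. apply is_derive_div.
  - apply dot3_is_derive; [exact Hn | exact Hm].
  - apply is_derive_sqrt; [apply dot3_is_derive; [exact Hm | exact Hm] | exact Hp].
  - apply Rgt_not_eq, sqrt_lt_R0, Hp.
Qed.

Lemma lagrange_identity (a b : pt) :
  dot3 a a * dot3 b b - (dot3 a b)^2 = dot3 (cross3 a b) (cross3 a b).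
Proof. unfold dot3, cross3; simpl; ring. Qed.

Lemma cross_parallel_normal (a b n : pt) c :
  dot3 n a = 0 -> dot3 n b = 0 -> dot3 n n = 1 -> (c < 3)%nat ->
  cross3 a b c = dot3 n (cross3 a b) * n c.
Proof.
  intros Ha Hb Hn Hc.
  assert (Id : cross3 a b c * dot3 n n - dot3 n (cross3 a b) * n c =
               dot3 n a * cross3 n b c - dot3 n b * cross3 n a c).
  { destruct c as [|[|[|c]]]; try lia; unfold dot3, cross3; simpl; ring. }
  rewrite Ha, Hb, Hn in Id. lra.
Qed.

Lemma dot_cross_normal_sq (a b n : pt) :
  dot3 n a = 0 -> dot3 n b = 0 -> dot3 n n = 1 ->
  dot3 n (cross3 a b) ^ 2 = dot3 (cross3 a b) (cross3 a b).
Proof.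
  intros Ha Hb Hn.
  pose proof (cross_parallel_normal a b n 0 Ha Hb Hn ltac:(lia)) as E0.
  pose proof (cross_parallel_normal a b n 1 Ha Hb Hn ltac:(lia)) as E1.
  pose proof (cross_parallel_normal a b n 2 Ha Hb Hn ltac:(lia)) as E2.
  set (s := dot3 n (cross3 a b)) in *.
  unfold dot3. rewrite E0, E1, E2.
  unfold dot3 in Hn. rewrite <- (Rmult_1_r (s ^ 2)), <- Hn. ring.
Qed.

Lemma orthogonal_parallel_cross (a b w : pt) c : dot3 w a = 0 -> dot3 w b = 0 -> (c < 3)%nat ->
  dot3 (cross3 a b) (cross3 a b) * w c = dot3 w (cross3 a b) * cross3 a b c.
Proof.
  intros Ha Hb Hc.
  assert (Id : dot3 (cross3 a b) (cross3 a b) * w c - dot3 w (cross3 a b) * cross3 a b c =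
               dot3 w b * cross3 (cross3 a b) a c - dot3 w a * cross3 (cross3 a b) b c).
  { destruct c as [|[|[|c]]]; try lia; unfold dot3, cross3; simpl; ring. }
  rewrite Ha, Hb in Id. lra.
Qed.

Lemma gram_system_unique (aa bb ab x y X Y : R) : aa * bb - ab ^ 2 <> 0 ->
  y * aa - x * ab = Y * aa - X * ab -> x * bb - y * ab = X * bb - Y * ab -> x = X /\ y = Y.
Proof.
  intros Hd E1 E2.
  assert (Ex : (x - X) * (aa * bb - ab ^ 2) =
    aa * (x * bb - y * ab - (X * bb - Y * ab)) + ab * (y * aa - x * ab - (Y * aa - X * ab))) by ring.
  assert (Ey : (y - Y) * (aa * bb - ab ^ 2) =
    bb * (y * aa - x * ab - (Y * aa - X * ab)) + ab * (x * bb - y * ab - (X * bb - Y * ab))) by ring.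
  rewrite E1, E2, !Rminus_diag, !Rmult_0_r, Rplus_0_r in Ex, Ey.
  apply Rmult_integral in Ex as [Ex|]; [|contradiction].
  apply Rmult_integral in Ey as [Ey|]; [|contradiction]. lra.
Qed.

(** * The orthonormal frame of the model *)

Definition metric_partial (k t : R) (l i j : nat) (p : pt) : R :=
  let x := p 0%nat in let y := p 1%nat in
  let L := lamM k p in let Lx := -(k/2)*x*L^2 in let Ly := -(k/2)*y*L^2 in
  match l with
  | 0%nat => match i, j with
    | 0%nat, 0%nat => 2*L*Lx*(1+t^2*y^2)
    | 1%nat, 1%nat => 2*L*Lx*(1+t^2*x^2) + 2*t^2*L^2*x
    | 0%nat, 1%nat | 1%nat, 0%nat => -(t^2*(2*L*Lx*x*y + L^2*y))
    | 0%nat, 2%nat | 2%nat, 0%nat => t*Lx*y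
    | 1%nat, 2%nat | 2%nat, 1%nat => -(t*(Lx*x + L))
    | _, _ => 0 end
  | 1%nat => match i, j with
    | 0%nat, 0%nat => 2*L*Ly*(1+t^2*y^2) + 2*t^2*L^2*y
    | 1%nat, 1%nat => 2*L*Ly*(1+t^2*x^2)
    | 0%nat, 1%nat | 1%nat, 0%nat => -(t^2*(2*L*Ly*x*y + L^2*x))
    | 0%nat, 2%nat | 2%nat, 0%nat => t*(Ly*y + L)
    | 1%nat, 2%nat | 2%nat, 1%nat => -(t*Ly*x)
    | _, _ => 0 end
  | _ => 0 end.

Lemma dgM_metric_partial k t l i j p :
  in_model k p -> dgM k t l i j p = metric_partial k t l i j p.
Proof.
  unfold in_model; intro Hp; unfold dgM.
  assert (Hp' : 1 + k/4*(p 0%nat * (p 0%nat * 1) + p 1%nat * (p 1%nat * 1)) <> 0)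
    by (simpl in Hp; lra).
  destruct l as [|[|l]].
  1, 2: apply is_derive_unique;
    destruct i as [|[|[|i]]]; destruct j as [|[|[|j]]];
    unfold gM, metric_partial, lamM, upd; simpl;
    first [ apply (is_derive_const (K:=R_AbsRing))
          | auto_derive; [repeat split; first [exact I | exact Hp'] | field; nra] ].
  rewrite (Derive_ext _ (fun _ => gM k t i j p)); [apply Derive_const|].
  intro s. reflexivity.
Qed.

(* Coordinates in the orthonormal frame dual to the coframe
   (lamM dx, lamM dy, dz + tau lamM (y dx - x dy)) of the metric; the third vector is xi. *)
Definition frame (k t : R) (p w : pt) : pt := fun c =>
  match c with
  | 0%nat => lamM k p * w 0%nat
  | 1%nat => lamM k p * w 1%nat
  | _ => w 2%nat + t * lamM k p * (p 1%nat * w 0%nat - p 0%nat * w 1%nat)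
  end.

Definition frame_deriv (k t : R) (p dp w dw : pt) : pt := fun c =>
  let L := lamM k p in
  let dL := -(k/2)*L^2*(p 0%nat * dp 0%nat + p 1%nat * dp 1%nat) in
  match c with
  | 0%nat => dL * w 0%nat + L * dw 0%nat
  | 1%nat => dL * w 1%nat + L * dw 1%nat
  | _ => dw 2%nat + t*dL*(p 1%nat * w 0%nat - p 0%nat * w 1%nat)
         + t*L*(dp 1%nat * w 0%nat + p 1%nat * dw 0%nat - dp 0%nat * w 1%nat - p 0%nat * dw 1%nat)
  end.

Definition frame_deriv2 (k t : R) (X dX Y dY W dW Z dZ : pt) : pt := fun c =>
  let L := lamM k X in
  let Ls := -(k/2)*L^2*(X 0%nat * dX 0%nat + X 1%nat * dX 1%nat) in
  let dL := -(k/2)*L^2*(X 0%nat * Y 0%nat + X 1%nat * Y 1%nat) in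
  let dLs := -(k/2)*(2*L*Ls*(X 0%nat * Y 0%nat + X 1%nat * Y 1%nat)
              + L^2*(dX 0%nat * Y 0%nat + X 0%nat * dY 0%nat + dX 1%nat * Y 1%nat + X 1%nat * dY 1%nat)) in
  match c with
  | 0%nat => dLs * W 0%nat + dL * dW 0%nat + Ls * Z 0%nat + L * dZ 0%nat
  | 1%nat => dLs * W 1%nat + dL * dW 1%nat + Ls * Z 1%nat + L * dZ 1%nat
  | _ => dZ 2%nat + t*dLs*(X 1%nat * W 0%nat - X 0%nat * W 1%nat)
     + t*dL*(dX 1%nat * W 0%nat + X 1%nat * dW 0%nat - dX 0%nat * W 1%nat - X 0%nat * dW 1%nat)
     + t*Ls*(Y 1%nat * W 0%nat + X 1%nat * Z 0%nat - Y 0%nat * W 1%nat - X 0%nat * Z 1%nat)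
     + t*L*(dY 1%nat * W 0%nat + Y 1%nat * dW 0%nat + dX 1%nat * Z 0%nat + X 1%nat * dZ 0%nat
            - dY 0%nat * W 1%nat - Y 0%nat * dW 1%nat - dX 0%nat * Z 1%nat - X 0%nat * dZ 1%nat)
  end.

(* The frame coordinates of nabla_X Y are the derivative along X of the frame coordinates y of Y,
   plus [conn k t p x y] with x the frame coordinates of X (see [covariant_lowered_frame]);
   [rot_conn] separates the rotation coefficient r, so that the derivative of [conn] is again of
   this shape. *)
Definition rot_conn (t r : R) (a Y : pt) : pt := fun c =>
  match c with
  | 0%nat => r * Y 1%nat + t*(a 1%nat * Y 2%nat + a 2%nat * Y 1%nat)
  | 1%nat => -(r * Y 0%nat) - t*(a 0%nat * Y 2%nat + a 2%nat * Y 0%nat)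
  | _ => t*(a 0%nat * Y 1%nat - a 1%nat * Y 0%nat)
  end.

Definition conn (k t : R) (p a Y : pt) : pt :=
  rot_conn t (k/2*(p 0%nat * a 1%nat - p 1%nat * a 0%nat)) a Y.

Lemma frame_is_derive k t (X W : R -> pt) dX dW s0 :
  in_model k (X s0) -> is_derive_vec X s0 dX -> is_derive_vec W s0 dW ->
  is_derive_vec (fun s => frame k t (X s) (W s)) s0 (frame_deriv k t (X s0) dX (W s0) dW).
Proof.
  unfold in_model; intros Hm HX HW c Hc. components HX. components HW.
  destruct c as [|[|[|c]]]; try lia; unfold frame, frame_deriv, lamM;
    cbv beta iota zeta; derive_eq; field; lra.
Qed.

Lemma frame_deriv_is_derive k t (X Y W Z : R -> pt) dX dY dW dZ s0 :
  in_model k (X s0) -> is_derive_vec X s0 dX -> is_derive_vec Y s0 dY ->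
  is_derive_vec W s0 dW -> is_derive_vec Z s0 dZ ->
  is_derive_vec (fun s => frame_deriv k t (X s) (Y s) (W s) (Z s)) s0
    (frame_deriv2 k t (X s0) dX (Y s0) dY (W s0) dW (Z s0) dZ).
Proof.
  unfold in_model; intros Hm HX HY HW HZ c Hc.
  components HX. components HY. components HW. components HZ.
  destruct c as [|[|[|c]]]; try lia; unfold frame_deriv, frame_deriv2, lamM;
    cbv beta iota zeta; derive_eq; field; lra.
Qed.

Lemma conn_is_derive k t (P a Y : R -> pt) dP da dY s0 :
  is_derive_vec P s0 dP -> is_derive_vec a s0 da -> is_derive_vec Y s0 dY ->
  is_derive_vec (fun s => conn k t (P s) (a s) (Y s)) s0
    (fun c => rot_conn t (k/2*(dP 0%nat * a s0 1%nat + P s0 0%nat * da 1%nat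
                               - dP 1%nat * a s0 0%nat - P s0 1%nat * da 0%nat)) da (Y s0) c
              + conn k t (P s0) (a s0) dY c).
Proof.
  intros HP Ha HY c Hc. components HP. components Ha. components HY.
  destruct c as [|[|[|c]]]; try lia; unfold conn, rot_conn; derive_eq; ring.
Qed.

Lemma conn_skew k t p x y z : dot3 (conn k t p x y) z + dot3 y (conn k t p x z) = 0.
Proof. unfold dot3, conn, rot_conn; simpl; ring. Qed.

Definition frame_transpose (k t : R) (p E : pt) : pt := fun c =>
  let L := lamM k p in
  match c with
  | 0%nat => L * E 0%nat + t * L * p 1%nat * E 2%nat
  | 1%nat => L * E 1%nat - t * L * p 0%nat * E 2%nat
  | _ => E 2%nat
  end.

Lemma frame_transpose_cross k t p A B c :
  frame_transpose k t p (cross3 (frame k t p A) (frame k t p B)) c = lamM k p ^ 2 * cross3 A B c.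
Proof. destruct c as [|[|c]]; unfold frame_transpose, cross3, frame; simpl; ring. Qed.

Lemma gdot_frame k t p v w : gdot k t p v w = dot3 (frame k t p v) (frame k t p w).
Proof. unfold gdot, sum3, dot3, frame, gM. simpl. ring. Qed.

Lemma gdot_coordinate k t p w c : (c < 3)%nat ->
  gdot k t p w (upd (fun _ => 0) c 1) = frame_transpose k t p (frame k t p w) c.
Proof.
  intro Hc. rewrite gdot_frame.
  destruct c as [|[|[|c]]]; try lia; unfold dot3, frame, frame_transpose, upd; simpl; ring.
Qed.

Lemma covariant_lowered_frame k t (p w n d : pt) c : in_model k p -> (c < 3)%nat ->
  sum3 (fun j => gM k t c j p * d j) +
  sum3 (fun i => sum3 (fun j => Gamma1 k t i j c p * w i * n j))
  = frame_transpose k t p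
      (fun c' => frame_deriv k t p w n d c' + conn k t p (frame k t p w) (frame k t p n) c') c.
Proof.
  intros Hp Hc. unfold sum3, Gamma1. rewrite !dgM_metric_partial by exact Hp.
  unfold in_model in Hp.
  assert (Hp' : 4 + k*(p 0%nat * p 0%nat + p 1%nat * p 1%nat) > 0) by (simpl in Hp; nra).
  destruct c as [|[|[|c]]]; try lia;
  unfold gM, metric_partial, frame_transpose, frame_deriv, conn, rot_conn, frame, lamM; simpl;
  field; nra.
Qed.

Lemma frame_transpose_eq0 k t p E : in_model k p ->
  (forall c, (c < 3)%nat -> frame_transpose k t p E c = 0) ->
  forall c, (c < 3)%nat -> E c = 0.
Proof.
  unfold in_model; intros Hp HE.
  assert (HL : lamM k p <> 0) by (apply Rinv_neq_0_compat; lra).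
  pose proof (HE 0%nat ltac:(lia)) as E0. pose proof (HE 1%nat ltac:(lia)) as E1.
  pose proof (HE 2%nat ltac:(lia)) as E2. unfold frame_transpose in E0, E1, E2; simpl in E0, E1, E2.
  rewrite E2, Rmult_0_r, Rplus_0_r in E0. rewrite E2, Rmult_0_r, Rminus_0_r in E1.
  intros c Hc. destruct c as [|[|[|c]]]; try lia; [| |exact E2].
  - destruct (Rmult_integral _ _ E0); [contradiction | assumption].
  - destruct (Rmult_integral _ _ E1); [contradiction | assumption].
Qed.

Lemma umbilic_frame k t (p w n d : pt) (l : R) : in_model k p ->
  (forall c, (c < 3)%nat ->
     sum3 (fun j => gM k t c j p * d j) +
     sum3 (fun i => sum3 (fun j => Gamma1 k t i j c p * w i * n j))
     = l * gdot k t p w (upd (fun _ => 0) c 1)) ->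
  forall c, (c < 3)%nat ->
  frame_deriv k t p w n d c = l * frame k t p w c - conn k t p (frame k t p w) (frame k t p n) c.
Proof.
  intros Hp Hum c Hc.
  enough (H : frame_deriv k t p w n d c + conn k t p (frame k t p w) (frame k t p n) c
              - l * frame k t p w c = 0) by lra.
  revert c Hc. apply (frame_transpose_eq0 k t p _ Hp). intros c Hc.
  specialize (Hum c Hc). rewrite covariant_lowered_frame, gdot_coordinate in Hum by assumption.
  destruct c as [|[|[|c]]]; try lia; unfold frame_transpose in *; simpl in *; lra.
Qed.

Lemma frame_torsion k t (p A B M : pt) c : in_model k p ->
  frame_deriv k t p B A M c - frame_deriv k t p A B M c =
  conn k t p (frame k t p A) (frame k t p B) c - conn k t p (frame k t p B) (frame k t p A) c.
Proof.
  unfold in_model; intro Hp. simpl in Hp.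
  destruct c as [|[|c]]; unfold frame_deriv, conn, rot_conn, frame, lamM; simpl; field; nra.
Qed.

(** * Umbilicity relations and the Codazzi equations *)

Definition cov (k t : R) (p x y dy : pt) : pt := fun c => dy c + conn k t p x y c.

(* l <X, Y> + <N, nabla_X Y> in frame coordinates. *)
Definition umb_rel (k t : R) (p : pt) (l : R) (n x y dy : pt) : R :=
  l * dot3 x y + dot3 n (cov k t p x y dy).

Definition umb_rel_deriv (k t : R) (p dp : pt) (l dl : R) (n dn x dx y dy z dz : pt) : R :=
  dl * dot3 x y + l * (dot3 dx y + dot3 x dy) + dot3 dn (cov k t p x y z) +
  dot3 n (fun c => dz c
    + rot_conn t (k/2*(dp 0%nat * x 1%nat + p 0%nat * dx 1%nat - dp 1%nat * x 0%nat - p 1%nat * dx 0%nat)) dx y c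
    + conn k t p x dy c).

Lemma cov_is_derive k t (P x y z : R -> pt) dP dx dy dz s0 :
  is_derive_vec P s0 dP -> is_derive_vec x s0 dx ->
  is_derive_vec y s0 dy -> is_derive_vec z s0 dz ->
  is_derive_vec (fun s => cov k t (P s) (x s) (y s) (z s)) s0
    (fun c => dz c
      + rot_conn t (k/2*(dP 0%nat * x s0 1%nat + P s0 0%nat * dx 1%nat
                         - dP 1%nat * x s0 0%nat - P s0 1%nat * dx 0%nat)) dx (y s0) c
      + conn k t (P s0) (x s0) dy c).
Proof.
  intros HP Hx Hy Hz c Hc. unfold cov. eapply is_derive_ext_value.
  - apply is_derive_plus_R; [exact (Hz c Hc)|]. exact (conn_is_derive k t P x y dP dx dy s0 HP Hx Hy c Hc).
  - cbv beta. ring.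
Qed.

Lemma umb_rel_is_derive k t (P : R -> pt) (l : R -> R) (n x y z : R -> pt) dP dl dn dx dy dz s0 :
  is_derive_vec P s0 dP -> is_derive l s0 dl -> is_derive_vec n s0 dn ->
  is_derive_vec x s0 dx -> is_derive_vec y s0 dy -> is_derive_vec z s0 dz ->
  is_derive (fun s => umb_rel k t (P s) (l s) (n s) (x s) (y s) (z s)) s0
    (umb_rel_deriv k t (P s0) dP (l s0) dl (n s0) dn (x s0) dx (y s0) dy (z s0) dz).
Proof.
  intros HP Hl Hn Hx Hy Hz. unfold umb_rel. eapply is_derive_ext_value.
  - apply is_derive_plus_R; [apply is_derive_mult_R; [exact Hl | apply dot3_is_derive; [exact Hx | exact Hy]]|].
    apply dot3_is_derive; [exact Hn|]. exact (cov_is_derive k t P x y z dP dx dy dz s0 HP Hx Hy Hz).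
  - unfold umb_rel_deriv. cbv beta. unfold dot3. ring.
Qed.

Lemma umb_rel_solve k t p (l : R) (n x dx : pt) :
  umb_rel k t p l n x x dx = 0 -> dot3 x x > 0 -> l = - dot3 n (cov k t p x x dx) / dot3 x x.
Proof. unfold umb_rel. intros H Hx. field_simplify_eq; lra. Qed.

Lemma umb_rel_ex_derive k t (P : R -> pt) (l : R -> R) (n x z : R -> pt) dP dn dx dz s0 :
  is_derive_vec P s0 dP -> is_derive_vec n s0 dn -> is_derive_vec x s0 dx -> is_derive_vec z s0 dz ->
  locally s0 (fun s => umb_rel k t (P s) (l s) (n s) (x s) (x s) (z s) = 0 /\ dot3 (x s) (x s) > 0) ->
  ex_derive l s0.
Proof.
  intros HP Hn Hx Hz Hloc. eexists.
  apply (is_derive_ext_loc (fun s => - dot3 (n s) (cov k t (P s) (x s) (x s) (z s)) / dot3 (x s) (x s))).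
  - eapply filter_imp; [|exact Hloc]. intros s [Hs Hxs]. symmetry. exact (umb_rel_solve _ _ _ _ _ _ _ Hs Hxs).
  - apply is_derive_div.
    + apply is_derive_opp_R, dot3_is_derive; [exact Hn|]. exact (cov_is_derive k t P x x z _ _ _ _ s0 HP Hx Hx Hz).
    + apply dot3_is_derive; exact Hx.
    + apply Rgt_not_eq, (proj2 (locally_singleton _ _ Hloc)).
Qed.

Lemma umb_rel_of_orthogonal k t p (l : R) (n y : R -> pt) x dy s0 :
  is_derive_vec n s0 (fun c => l * x c - conn k t p x (n s0) c) -> is_derive_vec y s0 dy ->
  locally s0 (fun s => dot3 (n s) (y s) = 0) -> umb_rel k t p l (n s0) x (y s0) dy = 0.
Proof.
  intros Hn Hy Hz.
  pose proof (is_derive_locally_zero _ _ _ (dot3_is_derive n y _ _ s0 Hn Hy) Hz) as E.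
  pose proof (conn_skew k t p x (n s0) (y s0)) as Sk.
  unfold umb_rel, cov. unfold dot3 in *. lra.
Qed.

Lemma codazzi_identity k t (p pu pv a b n au av bu bv auv bvu : pt) (l lu lv : R) :
  let D := 1 + k/4*(p 0%nat ^ 2 + p 1%nat ^ 2) in
  pu 0%nat = D * a 0%nat -> pu 1%nat = D * a 1%nat ->
  pv 0%nat = D * b 0%nat -> pv 1%nat = D * b 1%nat ->
  (forall c, av c = bu c + conn k t p a b c - conn k t p b a c) ->
  dot3 n a = 0 -> dot3 n b = 0 ->
  let nu := fun c => l * a c - conn k t p a n c in
  let nv := fun c => l * b c - conn k t p b n c in
  umb_rel_deriv k t p pv l lv n nv a av a av au auv = 0 ->
  umb_rel_deriv k t p pu l lu n nu b bu a au av auv = 0 ->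
  umb_rel_deriv k t p pu l lu n nu b bu b bu bv bvu = 0 ->
  umb_rel_deriv k t p pv l lv n nv a av b bv bu bvu = 0 ->
  lv * dot3 a a - lu * dot3 a b = (k - 4*t^2) * n 2%nat * (b 2%nat * dot3 a a - a 2%nat * dot3 a b) /\
  lu * dot3 b b - lv * dot3 a b = (k - 4*t^2) * n 2%nat * (a 2%nat * dot3 b b - b 2%nat * dot3 a b).
Proof.
  intros D Ha0 Ha1 Hb0 Hb1 Hav Hna Hnb nu nv H1 H2 H3 H4.
  (* the multiples of <n, a> = 0 and <n, b> = 0 that enter the linear combination *)
  assert (K1 : ((k - 3*t^2) * dot3 a a - (k - 4*t^2) * a 2%nat ^ 2) * dot3 n b = 0) by (rewrite Hnb; ring).
  assert (K2 : (-(k - 3*t^2) * dot3 a b + (k - 4*t^2) * a 2%nat * b 2%nat) * dot3 n a = 0) by (rewrite Hna; ring).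
  assert (K3 : ((k - 3*t^2) * dot3 b b - (k - 4*t^2) * b 2%nat ^ 2) * dot3 n a = 0) by (rewrite Hna; ring).
  assert (K4 : (-(k - 3*t^2) * dot3 a b + (k - 4*t^2) * a 2%nat * b 2%nat) * dot3 n b = 0) by (rewrite Hnb; ring).
  unfold umb_rel_deriv, cov, nu, nv, dot3, conn, rot_conn, D in *; cbv beta iota in *.
  rewrite !Hav in *. rewrite Ha0, Ha1, Hb0, Hb1 in *.
  split; lra.
Qed.

(* The last hypothesis is lam_uv = lam_vu, divided by kappa - 4 tau^2. *)
Lemma normal_vertical_sq k t (l : R) (p a b n av bu : pt) :
  dot3 n a = 0 -> dot3 n b = 0 -> dot3 n n = 1 -> dot3 (cross3 a b) (cross3 a b) > 0 -> t <> 0 ->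
  av 2%nat = bu 2%nat + conn k t p a b 2%nat - conn k t p b a 2%nat ->
  (l * a 2%nat - conn k t p a n 2%nat) * b 2%nat + n 2%nat * bu 2%nat =
  (l * b 2%nat - conn k t p b n 2%nat) * a 2%nat + n 2%nat * av 2%nat ->
  3 * n 2%nat ^ 2 = 1.
Proof.
  intros Ha Hb Hn Hm Ht Hav E.
  pose proof (cross_parallel_normal a b n 2 Ha Hb Hn ltac:(lia)) as P2.
  pose proof (dot_cross_normal_sq a b n Ha Hb Hn) as Sq.
  set (s := dot3 n (cross3 a b)) in *.
  assert (Hs : s <> 0) by (intro Z; rewrite Z in Sq; lra).
  assert (X : t * (s - 3 * n 2%nat * cross3 a b 2%nat) = 0).
  { rewrite Hav in E. unfold s. unfold conn, rot_conn, dot3, cross3 in *; simpl in *. lra. }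
  rewrite P2 in X.
  assert (Y : t * s * (1 - 3 * n 2%nat ^ 2) = 0) by (rewrite <- X; ring).
  apply Rmult_integral in Y as [Y|Y]; [|lra].
  apply Rmult_integral in Y as [|]; contradiction.
Qed.

Lemma umbilic_vertical_contradiction k t (l : R) (p a b n : pt) :
  dot3 n a = 0 -> dot3 n b = 0 -> dot3 n n = 1 -> dot3 (cross3 a b) (cross3 a b) > 0 -> t <> 0 ->
  3 * n 2%nat ^ 2 = 1 ->
  l * a 2%nat - conn k t p a n 2%nat = 0 -> l * b 2%nat - conn k t p b n 2%nat = 0 -> False.
Proof.
  intros Ha Hb Hn Hm Ht H3 Wa Wb.
  set (w := fun c => match c with 0%nat => - (t * n 1%nat) | 1%nat => t * n 0%nat | _ => l end).
  assert (wa : dot3 w a = 0) by (unfold w, dot3; unfold conn, rot_conn in Wa; simpl in *; lra).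
  assert (wb : dot3 w b = 0) by (unfold w, dot3; unfold conn, rot_conn in Wb; simpl in *; lra).
  set (m := cross3 a b) in *. set (M := dot3 m m) in *.
  pose proof (orthogonal_parallel_cross a b w 0 wa wb ltac:(lia)) as W0.
  pose proof (orthogonal_parallel_cross a b w 1 wa wb ltac:(lia)) as W1.
  pose proof (orthogonal_parallel_cross a b n 0 Ha Hb ltac:(lia)) as N0.
  pose proof (orthogonal_parallel_cross a b n 1 Ha Hb ltac:(lia)) as N1.
  fold m M in W0, W1, N0, N1.
  assert (K : M * M * (w 0%nat * n 1%nat - w 1%nat * n 0%nat) = 0).
  { replace (M * M * (w 0%nat * n 1%nat - w 1%nat * n 0%nat)) with
      ((M * w 0%nat) * (M * n 1%nat) - (M * w 1%nat) * (M * n 0%nat)) by ring.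
    rewrite W0, W1, N0, N1. ring. }
  apply Rmult_integral in K as [K|K]; [nra|].
  unfold w in K. simpl in K.
  assert (K2 : t * (n 0%nat * n 0%nat + n 1%nat * n 1%nat) = 0) by lra.
  apply Rmult_integral in K2 as [|K2]; [contradiction|].
  unfold dot3 in Hn. simpl in H3. nra.
Qed.

(** * Totally umbilic surfaces *)

Section UmbilicSurface.

Variables (k t : R) (U : R * R -> Prop) (f N : R * R -> pt) (lam : R * R -> R).
Hypothesis umbilic : totally_umbilic_surface k t U f N lam.

Lemma U_open : open U.
Proof. apply umbilic. Qed.

Lemma f_in_model q : U q -> in_model k (f q).
Proof. apply umbilic. Qed.

Lemma f_C3 : Cvec U 3 f.
Proof. unfold Cvec. apply umbilic. Qed.

Lemma f_indep q : U q -> indep (fu f q) (fv f q).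
Proof. apply umbilic. Qed.

Lemma N_unit_normal q : U q ->
  gdot k t (f q) (N q) (fu f q) = 0 /\ gdot k t (f q) (N q) (fv f q) = 0 /\
  gdot k t (f q) (N q) (N q) = 1.
Proof. apply umbilic. Qed.

Lemma N_partials q i : U q -> (i < 3)%nat ->
  ex_derive (fun s => N (s, snd q) i) (fst q) /\ ex_derive (fun s => N (fst q, s) i) (snd q).
Proof. apply umbilic. Qed.

Lemma N_umbilic q c : U q -> (c < 3)%nat ->
  covN_low k t f N true q c = lam q * gdot k t (f q) (fu f q) (upd (fun _ => 0) c 1) /\
  covN_low k t f N false q c = lam q * gdot k t (f q) (fv f q) (upd (fun _ => 0) c 1).
Proof. apply umbilic. Qed.

Lemma U_inhabited : exists q, U q.
Proof. apply umbilic. Qed.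

Lemma U_line_u u v : U (u, v) -> locally u (fun s => U (s, v)).
Proof. intro Huv. exact (locally_line_u U u v (U_open _ Huv)). Qed.

Lemma U_line_v u v : U (u, v) -> locally v (fun s => U (u, s)).
Proof. intro Huv. exact (locally_line_v U u v (U_open _ Huv)). Qed.

(* Frame coordinates of f_u, f_v, N and their partial derivatives; [fn_u] and [fn_v] are the
   values forced by umbilicity (see [fn_derive_u]). *)
Definition fa q := frame k t (f q) (fu f q).
Definition fb q := frame k t (f q) (fv f q).
Definition fn q := frame k t (f q) (N q).
Definition fa_u q := frame_deriv k t (f q) (fu f q) (fu f q) (fu (fu f) q).
Definition fa_v q := frame_deriv k t (f q) (fv f q) (fu f q) (fv (fu f) q).
Definition fb_u q := frame_deriv k t (f q) (fu f q) (fv f q) (fu (fv f) q).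
Definition fb_v q := frame_deriv k t (f q) (fv f q) (fv f q) (fv (fv f) q).
Definition fa_uv q :=
  frame_deriv2 k t (f q) (fv f q) (fu f q) (fv (fu f) q) (fu f q) (fv (fu f) q) (fu (fu f) q) (fv (fu (fu f)) q).
Definition fb_uv q :=
  frame_deriv2 k t (f q) (fu f q) (fv f q) (fu (fv f) q) (fv f q) (fu (fv f) q) (fv (fv f) q) (fu (fv (fv f)) q).
Definition fn_u q : pt := fun c => lam q * fa q c - conn k t (f q) (fa q) (fn q) c.
Definition fn_v q : pt := fun c => lam q * fb q c - conn k t (f q) (fb q) (fn q) c.

Let fu_C2 : Cvec U 2 (fu f) := Cvec_fu U 2 f f_C3.
Let fv_C2 : Cvec U 2 (fv f) := Cvec_fv U 2 f f_C3.

Lemma f_derive_u u v : U (u, v) -> is_derive_vec (fun s => f (s, v)) u (fu f (u, v)).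
Proof. exact (Cvec_is_derive_u U 2 f u v f_C3). Qed.

Lemma f_derive_v u v : U (u, v) -> is_derive_vec (fun s => f (u, s)) v (fv f (u, v)).
Proof. exact (Cvec_is_derive_v U 2 f u v f_C3). Qed.

Lemma fa_derive_u u v : U (u, v) -> is_derive_vec (fun s => fa (s, v)) u (fa_u (u, v)).
Proof.
  intro Huv. exact (frame_is_derive k t _ _ _ _ u (f_in_model _ Huv) (f_derive_u u v Huv)
    (Cvec_is_derive_u U 1 _ u v fu_C2 Huv)).
Qed.

Lemma fa_derive_v u v : U (u, v) -> is_derive_vec (fun s => fa (u, s)) v (fa_v (u, v)).
Proof.
  intro Huv. exact (frame_is_derive k t _ _ _ _ v (f_in_model _ Huv) (f_derive_v u v Huv)
    (Cvec_is_derive_v U 1 _ u v fu_C2 Huv)).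
Qed.

Lemma fb_derive_u u v : U (u, v) -> is_derive_vec (fun s => fb (s, v)) u (fb_u (u, v)).
Proof.
  intro Huv. exact (frame_is_derive k t _ _ _ _ u (f_in_model _ Huv) (f_derive_u u v Huv)
    (Cvec_is_derive_u U 1 _ u v fv_C2 Huv)).
Qed.

Lemma fb_derive_v u v : U (u, v) -> is_derive_vec (fun s => fb (u, s)) v (fb_v (u, v)).
Proof.
  intro Huv. exact (frame_is_derive k t _ _ _ _ v (f_in_model _ Huv) (f_derive_v u v Huv)
    (Cvec_is_derive_v U 1 _ u v fv_C2 Huv)).
Qed.

Lemma fa_u_derive_v u v : U (u, v) -> is_derive_vec (fun s => fa_u (u, s)) v (fa_uv (u, v)).
Proof.
  intro Huv. exact (frame_deriv_is_derive k t _ _ _ _ _ _ _ _ v (f_in_model _ Huv)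
    (f_derive_v u v Huv) (Cvec_is_derive_v U 1 _ u v fu_C2 Huv) (Cvec_is_derive_v U 1 _ u v fu_C2 Huv)
    (Cvec_is_derive_v U 0 _ u v (Cvec_fu U 1 _ fu_C2) Huv)).
Qed.

Lemma fb_v_derive_u u v : U (u, v) -> is_derive_vec (fun s => fb_v (s, v)) u (fb_uv (u, v)).
Proof.
  intro Huv. exact (frame_deriv_is_derive k t _ _ _ _ _ _ _ _ u (f_in_model _ Huv)
    (f_derive_u u v Huv) (Cvec_is_derive_u U 1 _ u v fv_C2 Huv) (Cvec_is_derive_u U 1 _ u v fv_C2 Huv)
    (Cvec_is_derive_u U 0 _ u v (Cvec_fv U 1 _ fv_C2) Huv)).
Qed.

Lemma schwarz_f u v i : U (u, v) -> (i < 3)%nat ->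
  fu (fv f) (u, v) i = fv (fu f) (u, v) i /\
  fu (fv (fu f)) (u, v) i = fv (fu (fu f)) (u, v) i /\
  fu (fv (fv f)) (u, v) i = fv (fu (fv f)) (u, v) i.
Proof.
  intros Huv Hi. split; [|split]; (apply (Cvec_schwarz U); [exact U_open | | exact Huv | exact Hi]).
  - exact (Cvec_weaken U 2 f f_C3).
  - exact fu_C2.
  - exact fv_C2.
Qed.

Lemma fa_v_derive_u u v : U (u, v) -> is_derive_vec (fun s => fa_v (s, v)) u (fa_uv (u, v)).
Proof.
  intros Huv c Hc. eapply is_derive_ext_value.
  - exact (frame_deriv_is_derive k t _ _ _ _ _ _ _ _ u (f_in_model _ Huv)
      (f_derive_u u v Huv) (Cvec_is_derive_u U 1 _ u v fv_C2 Huv) (Cvec_is_derive_u U 1 _ u v fu_C2 Huv)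
      (Cvec_is_derive_u U 0 _ u v (Cvec_fv U 1 _ fu_C2) Huv) c Hc).
  - destruct (schwarz_f u v 0 Huv ltac:(lia)) as [S0 [T0 _]].
    destruct (schwarz_f u v 1 Huv ltac:(lia)) as [S1 [T1 _]].
    destruct (schwarz_f u v 2 Huv ltac:(lia)) as [S2 [T2 _]].
    unfold fa_uv, frame_deriv2. destruct c as [|[|c]]; rewrite ?S0, ?S1, ?S2, ?T0, ?T1, ?T2; ring.
Qed.

Lemma fb_u_derive_v u v : U (u, v) -> is_derive_vec (fun s => fb_u (u, s)) v (fb_uv (u, v)).
Proof.
  intros Huv c Hc. eapply is_derive_ext_value.
  - exact (frame_deriv_is_derive k t _ _ _ _ _ _ _ _ v (f_in_model _ Huv)
      (f_derive_v u v Huv) (Cvec_is_derive_v U 1 _ u v fu_C2 Huv) (Cvec_is_derive_v U 1 _ u v fv_C2 Huv)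
      (Cvec_is_derive_v U 0 _ u v (Cvec_fu U 1 _ fv_C2) Huv) c Hc).
  - destruct (schwarz_f u v 0 Huv ltac:(lia)) as [S0 [_ T0]].
    destruct (schwarz_f u v 1 Huv ltac:(lia)) as [S1 [_ T1]].
    destruct (schwarz_f u v 2 Huv ltac:(lia)) as [S2 [_ T2]].
    unfold fb_uv, frame_deriv2. destruct c as [|[|c]]; rewrite ?S0, ?S1, ?S2, ?T0, ?T1, ?T2; ring.
Qed.

Lemma fn_derive_u u v : U (u, v) -> is_derive_vec (fun s => fn (s, v)) u (fn_u (u, v)).
Proof.
  intros Huv c Hc. eapply is_derive_ext_value.
  - apply (frame_is_derive k t _ (fun s => N (s, v)) _ (fu N (u, v)) u (f_in_model _ Huv)
      (f_derive_u u v Huv)); [|exact Hc].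
    intros i Hi. exact (Derive_correct _ _ (proj1 (N_partials _ i Huv Hi))).
  - exact (umbilic_frame k t _ _ _ _ _ (f_in_model _ Huv)
      (fun c Hc => proj1 (N_umbilic _ c Huv Hc)) c Hc).
Qed.

Lemma fn_derive_v u v : U (u, v) -> is_derive_vec (fun s => fn (u, s)) v (fn_v (u, v)).
Proof.
  intros Huv c Hc. eapply is_derive_ext_value.
  - apply (frame_is_derive k t _ (fun s => N (u, s)) _ (fv N (u, v)) v (f_in_model _ Huv)
      (f_derive_v u v Huv)); [|exact Hc].
    intros i Hi. exact (Derive_correct _ _ (proj2 (N_partials _ i Huv Hi))).
  - exact (umbilic_frame k t _ _ _ _ _ (f_in_model _ Huv)
      (fun c Hc => proj2 (N_umbilic _ c Huv Hc)) c Hc).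
Qed.

Lemma frame_unit_normal q : U q ->
  dot3 (fn q) (fa q) = 0 /\ dot3 (fn q) (fb q) = 0 /\ dot3 (fn q) (fn q) = 1.
Proof. intro Hq. unfold fn, fa, fb. rewrite <- !gdot_frame. exact (N_unit_normal q Hq). Qed.

Lemma umbilic_relations u v : U (u, v) ->
  let q := (u, v) in
  umb_rel k t (f q) (lam q) (fn q) (fa q) (fa q) (fa_u q) = 0 /\
  umb_rel k t (f q) (lam q) (fn q) (fb q) (fa q) (fa_v q) = 0 /\
  umb_rel k t (f q) (lam q) (fn q) (fa q) (fb q) (fb_u q) = 0 /\
  umb_rel k t (f q) (lam q) (fn q) (fb q) (fb q) (fb_v q) = 0.
Proof.
  intros Huv q. repeat split.
  - apply (umb_rel_of_orthogonal k t _ _ (fun s => fn (s, v)) (fun s => fa (s, v)));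
      [exact (fn_derive_u u v Huv) | exact (fa_derive_u u v Huv) |].
    eapply filter_imp; [|exact (U_line_u u v Huv)]. intros s Hs. apply (frame_unit_normal _ Hs).
  - apply (umb_rel_of_orthogonal k t _ _ (fun s => fn (u, s)) (fun s => fa (u, s)));
      [exact (fn_derive_v u v Huv) | exact (fa_derive_v u v Huv) |].
    eapply filter_imp; [|exact (U_line_v u v Huv)]. intros s Hs. apply (frame_unit_normal _ Hs).
  - apply (umb_rel_of_orthogonal k t _ _ (fun s => fn (s, v)) (fun s => fb (s, v)));
      [exact (fn_derive_u u v Huv) | exact (fb_derive_u u v Huv) |].
    eapply filter_imp; [|exact (U_line_u u v Huv)]. intros s Hs. apply (frame_unit_normal _ Hs).
  - apply (umb_rel_of_orthogonal k t _ _ (fun s => fn (u, s)) (fun s => fb (u, s)));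
      [exact (fn_derive_v u v Huv) | exact (fb_derive_v u v Huv) |].
    eapply filter_imp; [|exact (U_line_v u v Huv)]. intros s Hs. apply (frame_unit_normal _ Hs).
Qed.

Lemma frame_cross_pos q : U q -> dot3 (cross3 (fa q) (fb q)) (cross3 (fa q) (fb q)) > 0.
Proof.
  intro Hq. pose proof (f_in_model q Hq) as Hm. unfold in_model in Hm.
  assert (HL : lamM k (f q) ^ 2 <> 0) by (apply pow_nonzero, Rinv_neq_0_compat; lra).
  destruct (Rlt_or_le 0 (dot3 (cross3 (fa q) (fb q)) (cross3 (fa q) (fb q)))) as [|Hle]; [lra|exfalso].
  set (m := cross3 (fa q) (fb q)) in Hle. unfold dot3 in Hle.
  assert (M0 : m 0%nat = 0) by nra. assert (M1 : m 1%nat = 0) by nra. assert (M2 : m 2%nat = 0) by nra.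
  assert (Z : forall c, cross3 (fu f q) (fv f q) c = 0).
  { intro c. apply (Rmult_eq_reg_l (lamM k (f q) ^ 2)); [|exact HL].
    rewrite Rmult_0_r, <- (frame_transpose_cross k t). change (frame_transpose k t (f q) m c = 0).
    destruct c as [|[|c]]; unfold frame_transpose; rewrite ?M0, ?M1, ?M2; ring. }
  pose proof (f_indep q Hq) as Hi. pose proof (Z 0%nat). pose proof (Z 1%nat). pose proof (Z 2%nat).
  unfold indep, cross3 in *. simpl in *. tauto.
Qed.

Lemma frame_gram q : U q ->
  dot3 (fa q) (fa q) * dot3 (fb q) (fb q) - dot3 (fa q) (fb q) ^ 2 > 0 /\
  dot3 (fa q) (fa q) > 0 /\ dot3 (fb q) (fb q) > 0.
Proof.
  intro Hq. pose proof (frame_cross_pos q Hq) as Hc. rewrite <- lagrange_identity in Hc.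
  assert (Ha : dot3 (fa q) (fa q) >= 0) by (unfold dot3; nra).
  assert (Hb : dot3 (fb q) (fb q) >= 0) by (unfold dot3; nra).
  repeat split; nra.
Qed.

Lemma lam_ex_derive_u u v : U (u, v) -> ex_derive (fun s => lam (s, v)) u.
Proof.
  intro Huv.
  apply (umb_rel_ex_derive k t (fun s => f (s, v)) _ (fun s => fn (s, v)) (fun s => fb (s, v))
    (fun s => fb_v (s, v)) _ _ _ _ u (f_derive_u u v Huv) (fn_derive_u u v Huv)
    (fb_derive_u u v Huv) (fb_v_derive_u u v Huv)).
  eapply filter_imp; [|exact (U_line_u u v Huv)]. intros s Hs.
  split; [apply (umbilic_relations s v Hs) | apply (frame_gram _ Hs)].
Qed.

Lemma lam_ex_derive_v u v : U (u, v) -> ex_derive (fun s => lam (u, s)) v.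
Proof.
  intro Huv.
  apply (umb_rel_ex_derive k t (fun s => f (u, s)) _ (fun s => fn (u, s)) (fun s => fa (u, s))
    (fun s => fa_u (u, s)) _ _ _ _ v (f_derive_v u v Huv) (fn_derive_v u v Huv)
    (fa_derive_v u v Huv) (fa_u_derive_v u v Huv)).
  eapply filter_imp; [|exact (U_line_v u v Huv)]. intros s Hs.
  split; [apply (umbilic_relations u s Hs) | apply (frame_gram _ Hs)].
Qed.

Lemma fa_v_torsion u v c : U (u, v) ->
  let q := (u, v) in
  fa_v q c = fb_u q c + conn k t (f q) (fa q) (fb q) c - conn k t (f q) (fb q) (fa q) c.
Proof.
  intros Huv q.
  assert (E : fb_u q c = frame_deriv k t (f q) (fu f q) (fv f q) (fv (fu f) q) c).
  { destruct (schwarz_f u v 0 Huv ltac:(lia)) as [S0 _].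
    destruct (schwarz_f u v 1 Huv ltac:(lia)) as [S1 _].
    destruct (schwarz_f u v 2 Huv ltac:(lia)) as [S2 _].
    unfold q, fb_u, frame_deriv. destruct c as [|[|c]]; rewrite ?S0, ?S1, ?S2; reflexivity. }
  rewrite E. unfold fa_v, fa, fb.
  pose proof (frame_torsion k t (f q) (fu f q) (fv f q) (fv (fu f) q) c (f_in_model q Huv)). lra.
Qed.

Lemma umbilic_relations_derive u v : U (u, v) ->
  let q := (u, v) in
  let lu := Derive (fun s => lam (s, v)) u in
  let lv := Derive (fun s => lam (u, s)) v in
  umb_rel_deriv k t (f q) (fv f q) (lam q) lv (fn q) (fn_v q) (fa q) (fa_v q) (fa q) (fa_v q) (fa_u q) (fa_uv q) = 0 /\
  umb_rel_deriv k t (f q) (fu f q) (lam q) lu (fn q) (fn_u q) (fb q) (fb_u q) (fa q) (fa_u q) (fa_v q) (fa_uv q) = 0 /\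
  umb_rel_deriv k t (f q) (fu f q) (lam q) lu (fn q) (fn_u q) (fb q) (fb_u q) (fb q) (fb_u q) (fb_v q) (fb_uv q) = 0 /\
  umb_rel_deriv k t (f q) (fv f q) (lam q) lv (fn q) (fn_v q) (fa q) (fa_v q) (fb q) (fb_v q) (fb_u q) (fb_uv q) = 0.
Proof.
  intros Huv q lu lv.
  pose proof (Derive_correct _ _ (lam_ex_derive_u u v Huv)) as LU.
  pose proof (Derive_correct _ _ (lam_ex_derive_v u v Huv)) as LV.
  pose proof (f_derive_u u v Huv) as Fu. pose proof (f_derive_v u v Huv) as Fv.
  pose proof (fn_derive_u u v Huv) as Nu. pose proof (fn_derive_v u v Huv) as Nv.
  pose proof (fa_derive_u u v Huv) as Au. pose proof (fa_derive_v u v Huv) as Av.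
  pose proof (fb_derive_u u v Huv) as Bu. pose proof (fb_derive_v u v Huv) as Bv.
  repeat split; eapply is_derive_locally_zero.
  - exact (umb_rel_is_derive k t _ _ _ _ _ _ _ _ _ _ _ _ v Fv LV Nv Av Av (fa_u_derive_v u v Huv)).
  - eapply filter_imp; [|exact (U_line_v u v Huv)]. intros s Hs. apply (umbilic_relations u s Hs).
  - exact (umb_rel_is_derive k t _ _ _ _ _ _ _ _ _ _ _ _ u Fu LU Nu Bu Au (fa_v_derive_u u v Huv)).
  - eapply filter_imp; [|exact (U_line_u u v Huv)]. intros s Hs. apply (umbilic_relations s v Hs).
  - exact (umb_rel_is_derive k t _ _ _ _ _ _ _ _ _ _ _ _ u Fu LU Nu Bu Bu (fb_v_derive_u u v Huv)).
  - eapply filter_imp; [|exact (U_line_u u v Huv)]. intros s Hs. apply (umbilic_relations s v Hs).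
  - exact (umb_rel_is_derive k t _ _ _ _ _ _ _ _ _ _ _ _ v Fv LV Nv Av Bv (fb_u_derive_v u v Huv)).
  - eapply filter_imp; [|exact (U_line_v u v Huv)]. intros s Hs. apply (umbilic_relations u s Hs).
Qed.

Lemma codazzi u v : U (u, v) ->
  let q := (u, v) in
  Derive (fun s => lam (s, v)) u = (k - 4 * t ^ 2) * fn q 2%nat * fa q 2%nat /\
  Derive (fun s => lam (u, s)) v = (k - 4 * t ^ 2) * fn q 2%nat * fb q 2%nat.
Proof.
  intros Huv q.
  pose proof (f_in_model q Huv) as Hm. unfold in_model in Hm.
  assert (HD : forall i, (i < 2)%nat ->
    fu f q i = (1 + k/4*(f q 0%nat ^ 2 + f q 1%nat ^ 2)) * fa q i /\
    fv f q i = (1 + k/4*(f q 0%nat ^ 2 + f q 1%nat ^ 2)) * fb q i).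
  { intros i Hi. unfold fa, fb, frame, lamM.
    destruct i as [|[|i]]; try lia; split; field; lra. }
  destruct (HD 0%nat ltac:(lia)) as [A0 B0]. destruct (HD 1%nat ltac:(lia)) as [A1 B1].
  destruct (frame_unit_normal q Huv) as [Na [Nb _]].
  destruct (umbilic_relations_derive u v Huv) as [D1 [D2 [D3 D4]]].
  destruct (codazzi_identity k t _ _ _ _ _ _ _ _ _ _ _ _ _ _ _ A0 A1 B0 B1
              (fun c => fa_v_torsion u v c Huv) Na Nb D1 D2 D3 D4) as [E1 E2].
  destruct (frame_gram q Huv) as [G _].
  apply (gram_system_unique _ _ _ _ _ _ _ (Rgt_not_eq _ _ G)); [rewrite E1 | rewrite E2]; ring.
Qed.

Lemma frame_fields_continuous q c : U q ->
  continuous (fun q => fa q c) q /\ continuous (fun q => fb q c) q /\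
  continuous (fun q => fa_u q c) q /\ continuous (fun q => fa_v q c) q /\
  continuous (fun q => fb_u q c) q.
Proof.
  intro Hq. pose proof (f_in_model q Hq) as Hm. unfold in_model in Hm.
  assert (C : forall n g, Cvec U n g -> forall i, (i < 3)%nat -> continuous (fun q => g q i) q)
    by (intros n g Hg i Hi; exact (Cvec_continuous U n g q i Hg Hq Hi)).
  pose proof (C 3%nat f f_C3) as Cf. pose proof (C 2%nat _ fu_C2) as Cu. pose proof (C 2%nat _ fv_C2) as Cv.
  pose proof (C 1%nat _ (Cvec_fu U 1 _ fu_C2)) as Cuu. pose proof (C 1%nat _ (Cvec_fv U 1 _ fu_C2)) as Cvu.
  pose proof (C 1%nat _ (Cvec_fu U 1 _ fv_C2)) as Cuv.
  components Cf. components Cu. components Cv. components Cuu. components Cvu. components Cuv.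
  unfold fa, fb, fa_u, fa_v, fb_u, frame, frame_deriv, lamM.
  destruct c as [|[|c]]; repeat split; continuity_tac; simpl; lra.
Qed.

(* [fn] is one of the two unit normals [+- fm / |fm|] of the frame, and [sgn] tells which; being
   partially differentiable with values in {-1, 1}, it is locally constant.  This is how the
   continuity of N, which is not assumed, is obtained. *)
Definition fm q := cross3 (fa q) (fb q).
Definition sgn q := dot3 (fn q) (fm q) / sqrt (dot3 (fm q) (fm q)).

Lemma sgn_sq q : U q -> sgn q ^ 2 = 1.
Proof.
  intro Hq. destruct (frame_unit_normal q Hq) as [Na [Nb Nn]].
  pose proof (dot_cross_normal_sq _ _ _ Na Nb Nn) as Sq. pose proof (frame_cross_pos q Hq) as Hp.
  unfold sgn, fm. fold (fm q) in *.
  assert (Hs : sqrt (dot3 (fm q) (fm q)) <> 0) by (apply Rgt_not_eq, sqrt_lt_R0; lra).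
  unfold Rdiv. rewrite Rpow_mult_distr, pow_inv, <- Rsqr_pow2 with (x := sqrt _), Rsqr_sqrt by lra.
  rewrite Sq. field. lra.
Qed.

Lemma fn_sgn q c : U q -> (c < 3)%nat -> fn q c = sgn q * fm q c / sqrt (dot3 (fm q) (fm q)).
Proof.
  intros Hq Hc. destruct (frame_unit_normal q Hq) as [Na [Nb Nn]].
  pose proof (dot_cross_normal_sq _ _ _ Na Nb Nn) as Sq. pose proof (frame_cross_pos q Hq) as Hp.
  pose proof (cross_parallel_normal _ _ _ c Na Nb Nn Hc) as Pc.
  unfold sgn, fm in *. rewrite Pc.
  set (x := dot3 (fn q) (cross3 (fa q) (fb q))) in *.
  set (y := dot3 (cross3 (fa q) (fb q)) (cross3 (fa q) (fb q))) in *.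
  assert (Hs : sqrt y <> 0) by (apply Rgt_not_eq, sqrt_lt_R0; lra).
  assert (Hss : sqrt y * sqrt y = y) by (apply sqrt_sqrt; lra).
  field_simplify_eq; [|exact Hs]. rewrite <- Rsqr_pow2, Rsqr_sqrt by lra. rewrite <- Sq. ring.
Qed.

Lemma sgn_const_u a b s0 : (forall s, Rmin s0 a <= s <= Rmax s0 a -> U (s, b)) ->
  sgn (s0, b) = sgn (a, b).
Proof.
  intro Hseg. apply (sign_const_on_segment (fun s => sgn (s, b))). intros s Hs. split.
  - exact (normalized_dot_ex_derive _ _ _ _ s (fn_derive_u s b (Hseg s Hs))
      (cross3_is_derive _ _ _ _ s (fa_derive_u s b (Hseg s Hs)) (fb_derive_u s b (Hseg s Hs)))
      (frame_cross_pos _ (Hseg s Hs))).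
  - eapply filter_imp; [|exact (U_line_u s b (Hseg s Hs))]. intros s' Hs'. exact (sgn_sq _ Hs').
Qed.

Lemma sgn_const_v a b s0 : (forall s, Rmin s0 b <= s <= Rmax s0 b -> U (a, s)) ->
  sgn (a, s0) = sgn (a, b).
Proof.
  intro Hseg. apply (sign_const_on_segment (fun s => sgn (a, s))). intros s Hs. split.
  - exact (normalized_dot_ex_derive _ _ _ _ s (fn_derive_v a s (Hseg s Hs))
      (cross3_is_derive _ _ _ _ s (fa_derive_v a s (Hseg s Hs)) (fb_derive_v a s (Hseg s Hs)))
      (frame_cross_pos _ (Hseg s Hs))).
  - eapply filter_imp; [|exact (U_line_v a s (Hseg s Hs))]. intros s' Hs'. exact (sgn_sq _ Hs').
Qed.

Lemma sgn_locally_const u v : U (u, v) -> locally (u, v) (fun q => U q /\ sgn q = sgn (u, v)).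
Proof.
  intro Huv.
  assert (L2 : locally_2d (fun a b => U (a, b)) u v).
  { apply locally_2d_locally. eapply filter_imp; [|exact (U_open _ Huv)]. intros [a b] Hab; exact Hab. }
  destruct L2 as [d Hd].
  assert (L3 : locally_2d (fun a b => U (a, b) /\ sgn (a, b) = sgn (u, v)) u v).
  { exists d. intros a b Ha Hb. split; [exact (Hd a b Ha Hb)|].
    rewrite <- (sgn_const_u a b u), (sgn_const_v u b v); [reflexivity| |].
    - intros s Hs. apply Hd; [rewrite Rminus_diag, Rabs_R0; apply cond_pos |].
      pose proof (segment_abs_bound _ _ _ Hs). lra.
    - intros s Hs. apply Hd; [|exact Hb]. pose proof (segment_abs_bound _ _ _ Hs). lra. }
  apply locally_2d_locally in L3. eapply filter_imp; [|exact L3]. intros [a b] Hab; exact Hab.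
Qed.

Lemma fn_continuous q c : U q -> (c < 3)%nat -> continuous (fun q => fn q c) q.
Proof.
  intros Hq Hc. destruct q as [u v].
  apply (continuous_ext_loc _ (fun q => sgn (u, v) * fm q c / sqrt (dot3 (fm q) (fm q)))).
  - eapply filter_imp; [|exact (sgn_locally_const u v Hq)]. intros q [Uq Sq].
    rewrite (fn_sgn q c Uq Hc), Sq. reflexivity.
  - pose proof (frame_cross_pos _ Hq) as Hp.
    destruct (frame_fields_continuous _ 0 Hq) as [A0 [B0 _]].
    destruct (frame_fields_continuous _ 1 Hq) as [A1 [B1 _]].
    destruct (frame_fields_continuous _ 2 Hq) as [A2 [B2 _]].
    unfold fm, cross3, dot3. destruct c as [|[|c]]; continuity_tac; apply Rgt_not_eq, sqrt_lt_R0, Hp.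
Qed.

Lemma lam_continuous q : U q -> continuous lam q.
Proof.
  intro Hq. destruct q as [u v].
  apply (continuous_ext_loc _ (fun q =>
    - dot3 (fn q) (cov k t (f q) (fa q) (fa q) (fa_u q)) / dot3 (fa q) (fa q))).
  - eapply filter_imp; [|exact (U_open _ Hq)]. intros [a b] Hab.
    symmetry. apply umb_rel_solve; [apply (umbilic_relations a b Hab) | apply (frame_gram _ Hab)].
  - destruct (frame_gram _ Hq) as [_ [Ga _]].
    destruct (frame_fields_continuous _ 0 Hq) as [A0 [_ [AU0 _]]].
    destruct (frame_fields_continuous _ 1 Hq) as [A1 [_ [AU1 _]]].
    destruct (frame_fields_continuous _ 2 Hq) as [A2 [_ [AU2 _]]].
    pose proof (fn_continuous _ 0 Hq ltac:(lia)) as N0.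
    pose proof (fn_continuous _ 1 Hq ltac:(lia)) as N1.
    pose proof (fn_continuous _ 2 Hq ltac:(lia)) as N2.
    pose proof (Cvec_continuous U 3 f _ 0 f_C3 Hq ltac:(lia)) as F0.
    pose proof (Cvec_continuous U 3 f _ 1 f_C3 Hq ltac:(lia)) as F1.
    unfold cov, conn, rot_conn, dot3. continuity_tac. apply Rgt_not_eq, Ga.
Qed.

Lemma lam_mixed_u a b : U (a, b) ->
  is_derive (fun z => Derive (fun s => lam (z, s)) b) a
    ((k - 4 * t ^ 2) * (fn_u (a, b) 2%nat * fb (a, b) 2%nat + fn (a, b) 2%nat * fb_u (a, b) 2%nat)).
Proof.
  intro Hab. apply (is_derive_ext_loc (fun z => (k - 4 * t ^ 2) * fn (z, b) 2%nat * fb (z, b) 2%nat)).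
  - eapply filter_imp; [|exact (U_line_u a b Hab)]. intros z Hz. symmetry. exact (proj2 (codazzi z b Hz)).
  - pose proof (fn_derive_u a b Hab 2%nat ltac:(lia)). pose proof (fb_derive_u a b Hab 2%nat ltac:(lia)).
    derive_eq. ring.
Qed.

Lemma lam_mixed_v a b : U (a, b) ->
  is_derive (fun z => Derive (fun s => lam (s, z)) a) b
    ((k - 4 * t ^ 2) * (fn_v (a, b) 2%nat * fa (a, b) 2%nat + fn (a, b) 2%nat * fa_v (a, b) 2%nat)).
Proof.
  intro Hab. apply (is_derive_ext_loc (fun z => (k - 4 * t ^ 2) * fn (a, z) 2%nat * fa (a, z) 2%nat)).
  - eapply filter_imp; [|exact (U_line_v a b Hab)]. intros z Hz. symmetry. exact (proj1 (codazzi a z Hz)).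
  - pose proof (fn_derive_v a b Hab 2%nat ltac:(lia)). pose proof (fa_derive_v a b Hab 2%nat ltac:(lia)).
    derive_eq. ring.
Qed.

Lemma lam_mixed_continuous q : U q ->
  continuous (fun q => (k - 4 * t ^ 2) * (fn_u q 2%nat * fb q 2%nat + fn q 2%nat * fb_u q 2%nat)) q /\
  continuous (fun q => (k - 4 * t ^ 2) * (fn_v q 2%nat * fa q 2%nat + fn q 2%nat * fa_v q 2%nat)) q.
Proof.
  intro Hq. pose proof (lam_continuous q Hq) as L.
  destruct (frame_fields_continuous q 0 Hq) as [A0 [B0 _]].
  destruct (frame_fields_continuous q 1 Hq) as [A1 [B1 _]].
  destruct (frame_fields_continuous q 2 Hq) as [A2 [B2 [_ [AV2 BU2]]]].
  pose proof (fn_continuous q 0 Hq ltac:(lia)) as N0.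
  pose proof (fn_continuous q 1 Hq ltac:(lia)) as N1.
  pose proof (fn_continuous q 2 Hq ltac:(lia)) as N2.
  unfold fn_u, fn_v, conn, rot_conn. split; continuity_tac.
Qed.

Lemma lam_schwarz u v : U (u, v) -> du (dv lam) (u, v) = dv (du lam) (u, v).
Proof.
  intro Huv. destruct (lam_mixed_continuous _ Huv) as [C1 C2].
  apply (schwarz_du_dv U lam u v U_open Huv).
  - intros [a b] Hab. simpl. repeat split.
    + exact (lam_ex_derive_u a b Hab).
    + exact (lam_ex_derive_v a b Hab).
    + eexists. exact (lam_mixed_u a b Hab).
    + eexists. exact (lam_mixed_v a b Hab).
  - eapply continuous_ext_loc; [|exact C1].
    eapply filter_imp; [|exact (U_open _ Huv)]. intros [a b] Hab.
    symmetry. exact (is_derive_unique _ _ _ (lam_mixed_u a b Hab)).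
  - eapply continuous_ext_loc; [|exact C2].
    eapply filter_imp; [|exact (U_open _ Huv)]. intros [a b] Hab.
    symmetry. exact (is_derive_unique _ _ _ (lam_mixed_v a b Hab)).
Qed.

Hypothesis tau_neq0 : t <> 0.
Hypothesis kappa_tau_neq0 : k - 4 * t ^ 2 <> 0.

Lemma normal_vertical_third u v : U (u, v) -> 3 * fn (u, v) 2%nat ^ 2 = 1.
Proof.
  intro Huv.
  pose proof (eq_trans (eq_sym (is_derive_unique _ _ _ (lam_mixed_u u v Huv)))
               (eq_trans (lam_schwarz u v Huv) (is_derive_unique _ _ _ (lam_mixed_v u v Huv)))) as Sch.
  apply Rmult_eq_reg_l in Sch; [|exact kappa_tau_neq0].
  destruct (frame_unit_normal _ Huv) as [Na [Nb Nn]].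
  exact (normal_vertical_sq k t _ _ _ _ _ _ _ Na Nb Nn (frame_cross_pos _ Huv) tau_neq0
           (fa_v_torsion u v 2%nat Huv) Sch).
Qed.

Lemma no_totally_umbilic_surface : False.
Proof.
  destruct U_inhabited as [[u v] Huv].
  assert (Sq : forall q, U q -> fn q 2%nat ^ 2 = / 3).
  { intros [a b] Hab. pose proof (normal_vertical_third a b Hab). lra. }
  assert (Du : fn_u (u, v) 2%nat = 0).
  { apply (is_derive_locally_const_sq (fun s => fn (s, v) 2%nat) u _ (/ 3));
      [exact (fn_derive_u u v Huv 2%nat ltac:(lia)) | | lra].
    eapply filter_imp; [|exact (U_line_u u v Huv)]. intros s Hs. exact (Sq _ Hs). }
  assert (Dv : fn_v (u, v) 2%nat = 0).
  { apply (is_derive_locally_const_sq (fun s => fn (u, s) 2%nat) v _ (/ 3));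
      [exact (fn_derive_v u v Huv 2%nat ltac:(lia)) | | lra].
    eapply filter_imp; [|exact (U_line_v u v Huv)]. intros s Hs. exact (Sq _ Hs). }
  destruct (frame_unit_normal _ Huv) as [Na [Nb Nn]].
  exact (umbilic_vertical_contradiction k t _ _ _ _ _ Na Nb Nn (frame_cross_pos _ Huv) tau_neq0
           (normal_vertical_third u v Huv) Du Dv).
Qed.

End UmbilicSurface.

Theorem theorem2p1 (kappa tau : R) :
  tau <> 0 -> kappa - 4 * tau ^ 2 <> 0 ->
  (forall (U : R * R -> Prop) (f N : R * R -> pt) (lam : R * R -> R),
     ~ totally_umbilic_surface kappa tau U f N lam) /\
  (forall (U : R * R -> Prop) (f N : R * R -> pt),
     ~ totally_geodesic_surface kappa tau U f N).
Proof.
  intros Htau Hkt. split.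
  - intros U f N lam H. exact (no_totally_umbilic_surface kappa tau U f N lam H Htau Hkt).
  - intros U f N H. exact (no_totally_umbilic_surface kappa tau U f N (fun _ => 0) H Htau Hkt).
Qed.
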